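(* Let $\mathcal{D}$ be any basic action theory (including (P1), (P2) and $(\star)$) with a sensing action $\mathit{obs}(z)$ sensing the fluent $f$, with likelihood axiom $l(\mathit{obs}(z),s) = u \equiv u = \mathit{Err}(z,f(s))$ and precondition axiom $\mathit{Poss}(\mathit{obs}(z),s)\equiv \mathit{true}$, where $\mathit{Err}(u_1,u_2)$ is an expression with only two free (numeric) variables, and where $\mathit{obs}(z)$ does not change the value of any fluent (it appears in no successor state axiom of any fluent). Let $\phi$ be any $\mathcal{L}$-formula mentioning only $f$, and let $u$ be the variable among $\vec x = (x_1,\ldots,x_n)$ corresponding to the values of $f$. Then $$\mathcal{D} \models \textit{Bel}(\phi, do(\mathit{obs}(z),S_0)) = \frac{\int_{\vec x}[P(\vec x,\phi\land f=u,S_0)\times \mathit{Err}(z,u)]}{\int_{\vec x}[P(\vec x, f=u, S_0)\times \mathit{Err}(z,u)]}.$$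
   Context: Situation calculus: a many-sorted language $\mathcal{L}$ with sorts action, situation, object; $do(a,s)$ is the successor of $s$ under action $a$, $do(\alpha,s)$ for a sequence $\alpha$ is iterated $do$; $S_0$ the actual initial situation; $\mathit{Init}(s) \doteq \neg\exists a,s'.\, s = do(a,s')$; $\iota$ ranges over initial situations. The fluents $f_1,\ldots,f_n$ (one of which is $f$) are all the fluents, take only a situation argument, and take values in $\mathbb{R}$; $i$ ranges over $1..n$. $\phi[s]$ restores situation argument $s$ in situation-suppressed $\phi$. $\langle z.\ \psi \to t\rangle = v$ abbreviates $[(\exists z\psi)\supset \forall z(\psi \supset v = t)] \land [(\neg\exists z\psi) \supset v = 0]$. Distinguished symbols: $\mathit{Poss}(a,s)$, $p(s',s)$ (density of $s'$ when in $s$), $l(a,s)$ (likelihood). A basic action theory consists of an initial theory containing (P1) $\forall \iota,s.\ p(s,\iota) \ge 0 \land (p(s,\iota) > 0 \supset \mathit{Init}(s))$ and $(\star)$ $[\forall \vec x\, \exists \iota \bigwedge_i f_i(\iota) = x_i] \land [\forall \iota,\iota'.\ \bigwedge_i f_i(\iota) = f_i(\iota') \supset \iota = \iota']$; precondition axioms; successor state axioms including (P2) $p(s',do(a,s)) = v \equiv \exists s''[s' = do(a,s'') \land \mathit{Poss}(a,s'') \land v = p(s'',s)\times l(a,s'')] \lor \neg\exists s''[s'=do(a,s'')\land \mathit{Poss}(a,s'')] \land v = 0$; likelihood axioms $l(A(\vec y),s)=v\equiv\psi_A(\vec y,v,s)$; foundational axioms. For a ground action sequence $\alpha$, $P(\vec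 x,\phi,do(\alpha,S_0)) \doteq \langle \iota.\ \bigwedge_i f_i(\iota) = x_i \land \phi[do(\alpha,\iota)] \to p(do(\alpha,\iota),do(\alpha,S_0))\rangle$ (with $\alpha$ empty giving $P(\vec x,\phi,S_0)$), and $\textit{Bel}(\phi,s) \doteq \frac{1}{\gamma}\int_{\vec x} P(\vec x,\phi,s)$ with $\gamma$ the numerator with $\phi$ replaced by $\mathit{true}$. Here $\int_{\vec x}$ is the logical abbreviation of the improper Riemann integral over $\mathbb{R}^n$ (built from second-order-defined finite sums and $\epsilon$-style limit formulas), and entailment is over $\mathbb{R}$-interpretations (structures where arithmetic, $e$, $\pi$, exponentiation and logarithms have their usual meaning over the reals). *)

From Stdlib Require Import Reals List Classical ClassicalEpsilon.
From Coquelicot Require Import Coquelicot.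
Open Scope R_scope.

(** * Semantic rendering of an R-interpretation of a basic action theory. *)

Record BAT : Type := {
  Sit : Type;
  Act : Type;
  do_ : Act -> Sit -> Sit;
  S0 : Sit;
  nfl : nat;
  fl : nat -> Sit -> R;            (* fluent f_(i+1) is [fl i], i < nfl *)
  p : Sit -> Sit -> R;
  l : Act -> Sit -> R;
  Poss : Act -> Sit -> Prop;

  do_inj : forall a1 a2 s1 s2, do_ a1 s1 = do_ a2 s2 -> a1 = a2 /\ s1 = s2;
  sit_ind : forall P : Sit -> Prop,
      (forall s, (~ exists a s', s = do_ a s') -> P s) ->
      (forall a s, P s -> P (do_ a s)) -> forall s, P s;
  S0_init : ~ exists a s', S0 = do_ a s';

  ax_P1 : forall iota s, (~ exists a s', iota = do_ a s') ->
      p s iota >= 0 /\ (p s iota > 0 -> ~ exists a s', s = do_ a s');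

  ax_star_ex : forall x : nat -> R, exists iota,
      (~ exists a s', iota = do_ a s') /\ (forall i, (i < nfl)%nat -> fl i iota = x i);
  ax_star_uniq : forall iota iota',
      (~ exists a s', iota = do_ a s') -> (~ exists a s', iota' = do_ a s') ->
      (forall i, (i < nfl)%nat -> fl i iota = fl i iota') -> iota = iota';

  ax_P2 : forall s' a s v,
      p s' (do_ a s) = v <->
      ((exists s'', s' = do_ a s'' /\ Poss a s'' /\ v = p s'' s * l a s'') \/
       ((~ exists s'', s' = do_ a s'' /\ Poss a s'') /\ v = 0))
}.

Arguments do_ {b}.
Arguments S0 {b}.
Arguments fl {b}.
Arguments p {b}.
Arguments l {b}.
Arguments Poss {b}.


Definition Init {M : BAT} (s : Sit M) : Prop := ~ exists a s', s = do_ a s'.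

Definition doseq {M : BAT} (alpha : list (Act M)) (s : Sit M) : Sit M :=
  fold_left (fun s a => do_ a s) alpha s.

(** The abbreviation <z. psi -> t>, as a (total) term: if some z satisfies
    psi, the value of t at such a z (unique when relevant), else 0. *)
Definition guarded {S : Type} (psi : S -> Prop) (t : S -> R) : R :=
  match excluded_middle_informative (exists z, psi z) with
  | left H => t (proj1_sig (constructive_indefinite_description psi H))
  | right _ => 0
  end.

Definition Pdens {M : BAT} (x : nat -> R) (phi : Sit M -> Prop)
    (alpha : list (Act M)) : R :=
  guarded (fun iota : Sit M => Init iota /\
             (forall i, (i < nfl M)%nat -> fl i iota = x i) /\
             phi (doseq alpha iota))
          (fun iota => p (doseq alpha iota) (doseq alpha S0)).

Definition int_R (g : R -> R) : R :=
  real (Lim (fun u => RInt g (- u) u) p_infty).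

Definition upd (x : nat -> R) (i : nat) (t : R) : nat -> R :=
  fun j => if Nat.eqb j i then t else x j.

Fixpoint iint_from (m : nat) (F : (nat -> R) -> R) (x : nat -> R) : R :=
  match m with
  | O => F x
  | S m' => int_R (fun t => iint_from m' F (upd x m' t))
  end.

Definition integral_Rn (n : nat) (F : (nat -> R) -> R) : R :=
  iint_from n F (fun _ => 0).

Definition Bel {M : BAT} (phi : Sit M -> Prop) (alpha : list (Act M)) : R :=
  / integral_Rn (nfl M) (fun x => Pdens x (fun _ => True) alpha) *
  integral_Rn (nfl M) (fun x => Pdens x phi alpha).

(* Sensing [obs z] changes no fluent, so the initial situation with fluent
   values x is the only one whose successor [do(obs z, iota)] has those values,
   and (P2) multiplies its density by the likelihood [Err z (x k)].  Hence the
   density after sensing is, pointwise in x, the initial density times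
   [Err z (x k)], and the claim follows by integrating numerator and
   normalizer of [Bel]. *)
From Stdlib Require Import Reals List Classical ClassicalEpsilon FunctionalExtensionality.
Open Scope R_scope.

Lemma guarded_eq {S : Type} (P : S -> Prop) (t : S -> R) (s0 : S) :
  P s0 -> (forall s, P s -> s = s0) -> guarded P t = t s0.
Proof.
  intros Hs0 Huniq. unfold guarded.
  destruct (excluded_middle_informative (exists s, P s)) as [Hex | Hnex].
  - destruct (constructive_indefinite_description P Hex) as [w Hw]. simpl.
    now rewrite (Huniq w Hw).
  - exfalso. apply Hnex. now exists s0.
Qed.

Lemma guarded_none {S : Type} (P : S -> Prop) (t : S -> R) :
  ~ (exists s, P s) -> guarded P t = 0.
Proof.
  intros Hnex. unfold guarded.
  destruct (excluded_middle_informative (exists s, P s)); [contradiction | reflexivity].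
Qed.

Lemma p_do_Poss (M : BAT) (a : Act M) (s' s : Sit M) :
  Poss a s' -> p (do_ a s') (do_ a s) = p s' s * l a s'.
Proof.
  intros Hposs. apply (proj2 (ax_P2 M _ _ _ _)). left. now exists s'.
Qed.

Section InitialDensity.

Variable M : BAT.
Variable x : nat -> R.

Definition has_fluents (s : Sit M) : Prop :=
  forall i, (i < nfl M)%nat -> fl i s = x i.

Lemma Init_has_fluents_exists : exists iota, Init iota /\ has_fluents iota.
Proof. apply (ax_star_ex M x). Qed.

Lemma Init_has_fluents_unique (iota iota' : Sit M) :
  Init iota -> has_fluents iota -> Init iota' -> has_fluents iota' -> iota = iota'.
Proof.
  intros Hi Hx Hi' Hx'. apply (ax_star_uniq M); auto.
  intros i Hlt. now rewrite Hx, Hx'.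
Qed.

Lemma Pdens_sat (phi : Sit M -> Prop) (alpha : list (Act M)) (iota : Sit M) :
  Init iota -> has_fluents iota -> phi (doseq alpha iota) ->
  Pdens x phi alpha = p (doseq alpha iota) (doseq alpha S0).
Proof.
  intros Hi Hx Hphi. unfold Pdens. rewrite (guarded_eq _ _ iota); [reflexivity | now repeat split |].
  intros s (Hs & Hsx & _). now apply Init_has_fluents_unique.
Qed.

Lemma Pdens_unsat (phi : Sit M -> Prop) (alpha : list (Act M)) (iota : Sit M) :
  Init iota -> has_fluents iota -> ~ phi (doseq alpha iota) ->
  Pdens x phi alpha = 0.
Proof.
  intros Hi Hx Hnphi. unfold Pdens. apply guarded_none.
  intros (s & Hs & Hsx & Hphi). apply Hnphi.
  now rewrite <- (Init_has_fluents_unique s iota).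
Qed.

Lemma Pdens_equiv_on (phi psi : Sit M -> Prop) (alpha : list (Act M)) :
  (forall iota, Init iota -> has_fluents iota ->
     phi (doseq alpha iota) <-> psi (doseq alpha iota)) ->
  Pdens x phi alpha = Pdens x psi alpha.
Proof.
  intros Hequiv. destruct Init_has_fluents_exists as (iota & Hi & Hx).
  specialize (Hequiv iota Hi Hx).
  destruct (classic (phi (doseq alpha iota))) as [Hphi | Hnphi].
  - rewrite (Pdens_sat phi alpha iota), (Pdens_sat psi alpha iota); tauto.
  - rewrite (Pdens_unsat phi alpha iota), (Pdens_unsat psi alpha iota); tauto.
Qed.

Lemma Pdens_nil_fix_fluent (phi : Sit M -> Prop) (k : nat) :
  (k < nfl M)%nat ->
  Pdens x phi nil = Pdens x (fun s => phi s /\ fl k s = x k) nil.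
Proof.
  intros hk. apply Pdens_equiv_on. intros iota _ Hx. simpl.
  specialize (Hx k hk). tauto.
Qed.

Variables (a : Act M) (k : nat) (g : R -> R).
Hypothesis hk : (k < nfl M)%nat.
Hypothesis Poss_a : forall s, Poss a s.
Hypothesis l_a : forall s, l a s = g (fl k s).

Lemma Pdens_sense (phi : Sit M -> Prop) :
  (forall s, phi (do_ a s) <-> phi s) ->
  Pdens x phi (a :: nil) = Pdens x phi nil * g (x k).
Proof.
  intros Hinv. destruct Init_has_fluents_exists as (iota & Hi & Hx).
  specialize (Hinv iota).
  destruct (classic (phi iota)) as [Hphi | Hnphi].
  - rewrite (Pdens_sat phi (a :: nil) iota), (Pdens_sat phi nil iota); simpl; try tauto.
    now rewrite p_do_Poss, l_a, (Hx k hk).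
  - rewrite (Pdens_unsat phi (a :: nil) iota), (Pdens_unsat phi nil iota); simpl; try tauto.
    ring.
Qed.

End InitialDensity.

Theorem mainTheorem12 (M : BAT) (k : nat) (hk : (k < nfl M)%nat)
  (obs : R -> Act M) (Err : R -> R -> R) (Q : R -> Prop)
  (H_lik : forall z s u, l (obs z) s = u <-> u = Err z (fl k s))
  (H_poss : forall z s, Poss (obs z) s <-> True)
  (H_frame : forall z s i, (i < nfl M)%nat -> fl i (do_ (obs z) s) = fl i s)
  (z : R) :
  Bel (fun s : Sit M => Q (fl k s)) (obs z :: nil) =
  integral_Rn (nfl M) (fun x =>
      Pdens x (fun s : Sit M => Q (fl k s) /\ fl k s = x k) nil * Err z (x k)) /
  integral_Rn (nfl M) (fun x =>
      Pdens x (fun s : Sit M => fl k s = x k) nil * Err z (x k)).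
Proof.
  assert (Poss_obs : forall s, Poss (obs z) s) by (intro s; now apply H_poss).
  assert (l_obs : forall s, l (obs z) s = Err z (fl k s)) by (intro s; now apply H_lik).
  assert (Q_frame : forall s, Q (fl k (do_ (obs z) s)) <-> Q (fl k s))
    by (intro s; now rewrite H_frame).
  assert (Hnum : (fun x => Pdens x (fun s : Sit M => Q (fl k s)) (obs z :: nil)) =
    (fun x => Pdens x (fun s : Sit M => Q (fl k s) /\ fl k s = x k) nil * Err z (x k))).
  { extensionality x. rewrite (Pdens_sense M x (obs z) k (Err z)) by auto.
    now rewrite (Pdens_nil_fix_fluent M x _ k hk). }
  assert (Hnorm : (fun x => Pdens x (fun _ : Sit M => True) (obs z :: nil)) =
    (fun x => Pdens x (fun s : Sit M => fl k s = x k) nil * Err z (x k))).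
  { extensionality x. rewrite (Pdens_sense M x (obs z) k (Err z)) by (auto; tauto).
    f_equal. apply Pdens_equiv_on. intros iota _ Hx. simpl.
    specialize (Hx k hk). tauto. }
  unfold Bel. rewrite Hnum, Hnorm. unfold Rdiv. apply Rmult_comm.
Qed.
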